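(* Let $X$ be a finite connected $s$-regular graph with vertex set $X^0$, edge set $X^1$, and let $\lambda_2$ be the second largest eigenvalue of its adjacency matrix. Let $0<\alpha\le 1$ and let $E\subset X^1$ with $|E|\le\alpha|X^1|$. Let $\Gamma(E)\subset X^0$ be the set of vertices incident to some edge of $E$. Then $|\Gamma(E)|\ge\beta|E|$, where $$\beta=\frac{\sqrt{\lambda_2^2+4s(s-\lambda_2)\alpha}-\lambda_2}{s(s-\lambda_2)\alpha}.$$ *)

From HB Require Import structures.
From mathcomp Require Import all_boot all_order all_algebra.
Set Implicit Arguments. Unset Strict Implicit. Unset Printing Implicit Defensive.
Import Order.TTheory GRing.Theory Num.Theory.
Local Open Scope ring_scope.

Definition simple_graph n (e : rel 'I_n) : Prop :=
  symmetric e /\ irreflexive e.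

Definition regular n (e : rel 'I_n) (s : nat) : Prop :=
  forall x : 'I_n, #|[set y | e x y]| = s.

Definition connected_graph n (e : rel 'I_n) : Prop :=
  forall x y : 'I_n, connect e x y.

Definition edges n (e : rel 'I_n) : {set {set 'I_n}} :=
  [set [set x; y] | x in 'I_n, y in 'I_n & e x y].

Definition adjacency (R : nzRingType) n (e : rel 'I_n) : 'M[R]_n :=
  \matrix_(i, j) (e i j)%:R.

(* l2 is the second largest eigenvalue of A (eigenvalues counted with
   multiplicity): the characteristic polynomial of A factors as
   prod_(x <- r) ('X - x) with r sorted non-increasingly, and l2 = r_1. *)
Definition second_largest_eigenvalue (R : rcfType) n (A : 'M[R]_n) (l2 : R)
  : Prop :=
  exists r : seq R,
    [/\ sorted >=%R r, char_poly A = \prod_(x <- r) ('X - x%:P)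
      & l2 = r`_1].

Definition incident_vertices n (E : {set {set 'I_n}}) : {set 'I_n} :=
  [set v | [exists f in E, v \in f]].

From HB Require Import structures.
From mathcomp Require Import all_boot all_order all_algebra.
From mathcomp Require Import complex spectral.
From mathcomp Require Import ring lra.
Import Order.TTheory GRing.Theory Num.Theory.
Local Open Scope ring_scope.
Local Open Scope sesquilinear_scope.

(* Let A be the adjacency matrix of the s-regular graph X, E a set of edges,
   G = Gamma(E) the set of vertices incident to E, and x the indicator vector
   of G.  A is real symmetric, so A = P^* D P with P unitary and
      D real (over R[i]).  Every eigenvalue is at most s because the columns of
      A sum to s, and since the eigenvalues are sorted, at most one of them
      exceeds the second largest one l2.  The all-ones vector only has
      coordinates along eigenvectors for s; expanding x in the eigenbasis gives
        x A x^T <= l2 |x|^2 + (s - l2) (sum x)^2 / n.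
   2. Double counting.  x A x^T is the number of ordered pairs of adjacent
      vertices of G, which is at least 2 |E|; and 2 |X^1| = s n.
   3. Arithmetic.  For M = |E|, K = |G|: 2M <= l2 K + (s - l2) K^2 / n and
      2M <= alpha s n yield c K^2 + 2 l2 M K - 4 M^2 >= 0 with
      c = s (s - l2) alpha, so K / M is at least the positive root beta. *)

Lemma char_poly_conjmx {F : fieldType} {n} (P M : 'M[F]_n) : P \in unitmx ->
  char_poly (invmx P *m M *m P) = char_poly M.
Proof.
move=> Pu; rewrite /char_poly /char_poly_mx.
have -> : 'X%:M - map_mx polyC (invmx P *m M *m P) =
    map_mx polyC (invmx P) *m ('X%:M - map_mx polyC M) *m map_mx polyC P.
  rewrite mulmxBr mulmxBl !map_mxM; congr (_ - _).
  by rewrite mul_mx_scalar -scalemxAl -map_mxM mulVmx // map_mx1 scalemx1.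
rewrite !det_mulmx !det_map_mx mulrC mulrA -rmorphM -det_mulmx mulmxV //.
by rewrite det1 rmorph1 mul1r.
Qed.

Lemma real_conjmx {R : rcfType} {m p} (M : 'M[R]_(m, p)) :
  (map_mx (real_complex R) M)^t* = map_mx (real_complex R) M^T.
Proof.
apply/matrixP => i j; rewrite !mxE.
by apply/CrealP/complex_realP; exists (M j i).
Qed.

Lemma real_symmetric_spectral {R : rcfType} {n} (A : 'M[R]_n) : A^T = A ->
  exists2 P : 'M[R[i]]_n, P \is unitarymx & exists d : 'I_n -> R,
    map_mx (real_complex R) A = P^t* *m diag_mx (\row_i (d i)%:C%C) *m P /\
    char_poly A = \prod_(i < n) ('X - (d i)%:P).
Proof.
move=> Asym; set Ac := map_mx (real_complex R) A.
have Ac_herm : Ac \is hermsymmx.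
  apply/is_hermitianmxP; rewrite expr0 scale1r; apply/matrixP => i j.
  rewrite !mxE -[in RHS]Asym mxE; apply/esym/CrealP/complex_realP.
  by exists (A i j).
set P := spectralmx Ac; set D := spectral_diag Ac.
have P_unitary : P \is unitarymx by apply: spectral_unitarymx.
have AcE : Ac = P^t* *m diag_mx D *m P.
  by rewrite -invmx_unitary //; apply/orthomx_spectralP/hermitian_normalmx.
have D_real i : D 0 i = (complex.Re (D 0 i))%:C%C.
  have := hermitian_spectral_diag_real Ac_herm.
  by move=> /mxOverP/(_ 0 i)/complex_realP[k ->].
exists P => //; exists (fun i => complex.Re (D 0 i)); split.
  rewrite AcE; congr (_ *m diag_mx _ *m _).
  by apply/rowP => i; rewrite mxE -D_real.
apply: (@map_poly_inj _ _ (real_complex R)).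
rewrite map_char_poly -/Ac AcE -invmx_unitary //.
rewrite char_poly_conjmx ?unitarymx_unit //.
rewrite char_poly_trig ?diag_mx_is_trig // rmorph_prod; apply: eq_bigr => i _.
by rewrite rmorphB /= map_polyX map_polyC /= mxE eqxx mulr1n -D_real.
Qed.

(* Coordinates of row vectors in the orthonormal eigenbasis of a normal
   matrix M = P^* D P: the rows of P are eigenvectors, and both the inner
   product and the quadratic form of M become diagonal sums. *)
Definition coords {C : numClosedFieldType} {n} (P : 'M[C]_n) (y : 'rV[C]_n) :
  'rV[C]_n := y *m P^t*.

Section UnitaryCoordinates.
Context {C : numClosedFieldType} {n : nat} {P : 'M[C]_n}.
Hypothesis P_unitary : P \is unitarymx.
Context {D : 'rV[C]_n}.

Let M := P^t* *m diag_mx D *m P.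

Lemma unitary_mulVmx : P^t* *m P = 1%:M.
Proof. by rewrite -invmx_unitary // mulVmx // unitarymx_unit. Qed.

Lemma dot_coords (y u : 'rV[C]_n) :
  (y *m u^t*) 0 0 = \sum_i coords P y 0 i * (coords P u 0 i)^*.
Proof.
have -> : y *m u^t* = coords P y *m (coords P u)^t*.
  rewrite /coords trmx_mul map_mxM trmxCK mulmxA -(mulmxA y).
  by rewrite unitary_mulVmx mulmx1.
by rewrite !mxE; apply: eq_bigr => i _; rewrite !mxE.
Qed.

Lemma quad_coords (y u : 'rV[C]_n) :
  (y *m M *m u^t*) 0 0 = \sum_i D 0 i * (coords P y 0 i * (coords P u 0 i)^*).
Proof.
have -> : y *m M *m u^t* = coords P y *m diag_mx D *m (coords P u)^t*.
  by rewrite /M /coords trmx_mul map_mxM trmxCK !mulmxA.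
rewrite mul_mx_diag !mxE; apply: eq_bigr => i _; rewrite !mxE.
by rewrite mulrAC mulrC.
Qed.

Lemma row_left_eigen i : row i P *m M = D 0 i *: row i P.
Proof.
have PM : P *m M = diag_mx D *m P.
  by rewrite /M !mulmxA (unitarymxP P_unitary) mul1mx.
by apply/rowP => j; rewrite -row_mul PM mul_diag_mx !mxE.
Qed.

Lemma row_unitary_neq0 i : row i P != 0.
Proof.
apply/eqP => Pi0.
have Pik k : P i k = 0 by have /rowP/(_ k) := Pi0; rewrite !mxE.
have /matrixP/(_ i i) := unitarymxP P_unitary.
rewrite !mxE eqxx big1 => [/esym/eqP|k _]; last by rewrite Pik mul0r.
by rewrite oner_eq0.
Qed.

Lemma eigen_coords (y : 'rV[C]_n) (a : C) i :
  y *m M = a *: y -> coords P y 0 i != 0 -> D 0 i = a.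
Proof.
move=> yM yi; apply: (mulIf yi).
have : coords P y *m diag_mx D = a *: coords P y.
  rewrite /coords scalemxAl -yM /M !mulmxA -(mulmxA _ P).
  by rewrite (unitarymxP P_unitary) mulmx1.
by move=> /rowP/(_ i); rewrite mul_mx_diag !mxE mulrC.
Qed.

Lemma dot_single_coord (y u : 'rV[C]_n) j :
  (forall k, k != j -> coords P u 0 k = 0) ->
  (y *m u^t*) 0 0 * (u *m y^t*) 0 0 =
  coords P y 0 j * (coords P y 0 j)^* * (u *m u^t*) 0 0.
Proof.
move=> uj; have single (f : 'I_n -> C) : (forall k, k != j -> f k = 0) ->
    \sum_i f i = f j by move=> f0; rewrite (bigD1 j) //= big1 ?addr0.
rewrite !dot_coords !single; first by ring.
all: by move=> k kj; rewrite uj // ?conjC0 ?mulr0 ?mul0r.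
Qed.

End UnitaryCoordinates.

Lemma left_eigenvalue_le_colsum {F : numDomainType} {n} (A : 'M[F]_n) (s a : F)
    (v : 'rV[F]_n) :
  (forall i j, 0 <= A i j) -> (forall j, \sum_i A i j = s) ->
  v != 0 -> v *m A = a *: v -> `|a| <= s.
Proof.
move=> A_ge0 A_col v_neq0 vA.
have [k0 vk0] : exists k0, v 0 k0 != 0.
  apply/existsP; apply: contraR v_neq0; rewrite negb_exists => /forallP v0.
  by apply/eqP/rowP => k; rewrite mxE; apply/eqP/negPn.
have [k _ kmax] := real_arg_maxP (i0 := k0) (P := xpredT)
  (F := fun k => `|v 0 k|) isT (fun k _ => normr_real _).
have vk_gt0 : 0 < `|v 0 k|.
  by apply: lt_le_trans (kmax k0 isT); rewrite normr_gt0.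
rewrite -(ler_pM2r vk_gt0) -normrM.
have -> : a * v 0 k = \sum_m v 0 m * A m k.
  by have /rowP/(_ k) := vA; rewrite !mxE => <-.
apply: le_trans (ler_norm_sum _ _ _) _.
rewrite -(A_col k) mulr_suml; apply: ler_sum => m _.
rewrite normrM (ger0_norm (A_ge0 m k)) mulrC.
by apply: ler_wpM2l => //; apply: kmax.
Qed.

Lemma count_enum_card {T : finType} (p : pred T) : count p (enum T) = #|p|.
Proof.
rewrite cardE -size_filter /enum_mem -filter_predI.
by congr size; apply: eq_filter => y /=; rewrite andbT.
Qed.

Lemma sorted_count_gt_second {R : realDomainType} {r : seq R} :
  sorted >=%R r -> (count (fun y => (r`_1 < y)%R) r <= 1)%N.
Proof.
case: r => [|a [|b t]] //=; first by rewrite addn0; case: (_ < a).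
case/andP=> _ bt; rewrite ltxx add0n.
have ge_trans : transitive (>=%R : rel R).
  by move=> x y z /[swap]; apply: le_trans.
suff -> : count (fun y => (b < y)%R) t = 0%N by case: (b < a).
apply/eqP; rewrite -leqn0 leqNgt -has_count; apply/hasPn => y yt.
by rewrite -leNgt; apply: (allP (order_path_min ge_trans bt)).
Qed.

Lemma second_eigenvalue_spectral {R : rcfType} {n} (A : 'M[R]_n) (l2 : R) :
  A^T = A -> second_largest_eigenvalue A l2 -> (1 < n)%N ->
  exists2 P : 'M[R[i]]_n, P \is unitarymx & exists d : 'I_n -> R,
    [/\ map_mx (real_complex R) A = P^t* *m diag_mx (\row_i (d i)%:C%C) *m P,
        exists i2, l2 = d i2
      & forall i k, l2 < d i -> l2 < d k -> i = k].
Proof.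
move=> Asym [r [r_sorted cpr l2E]] n_gt1.
have [P P_unitary [d [AcE cpA]]] := real_symmetric_spectral A Asym.
have r_perm : perm_eq r [seq d i | i <- enum 'I_n].
  by apply: prod_XsubC_eq; rewrite -cpr cpA big_map big_enum.
have size_r : size r = n.
  by have := size_char_poly A; rewrite cpr size_prod_XsubC; case.
exists P => //; exists d; split => //.
  have : l2 \in r by rewrite l2E mem_nth // size_r.
  by rewrite (perm_mem r_perm) => /mapP [i2 _ ->]; exists i2.
have := sorted_count_gt_second r_sorted.
rewrite -l2E (permP r_perm) count_map count_enum_card => /card_le1_eqP above.
by move=> i k li lk; apply: above; rewrite unfold_in.
Qed.

Lemma weighted_sum_le {F : numDomainType} {n} (j : 'I_n) (d w : 'I_n -> F)
    (l m c : F) :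
  (forall i, 0 <= w i) -> l <= m -> 0 <= c ->
  (forall k, k != j -> d k <= l) -> d j <= l \/ d j = m /\ w j = c ->
  \sum_i d i * w i <= l * \sum_i w i + (m - l) * c.
Proof.
move=> w_ge0 lm c_ge0 d_le top.
rewrite (bigD1 j) //= [X in l * X](bigD1 j) //=.
set Sd := \sum_(i | i != j) _; set Sw := \sum_(i | i != j) _.
have Sd_le : Sd <= l * Sw.
  by rewrite mulr_sumr; apply: ler_sum => k kj; rewrite ler_wpM2r ?d_le.
case: top => [djl | [-> ->]].
  apply: le_trans (lerD (ler_wpM2r (w_ge0 j) djl) Sd_le) _.
  by rewrite mulrDr lerDl mulr_ge0 // subr_ge0.
have -> : l * (c + Sw) + (m - l) * c = m * c + l * Sw by ring.
by rewrite lerD2l.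
Qed.

Section SpectralQuadraticBound.
Context {R : rcfType} {n : nat} {A : 'M[R]_n} {s : R}.
Context {P : 'M[R[i]]_n} {d : 'I_n -> R}.
Hypothesis A_ge0 : forall i j, 0 <= A i j.
Hypothesis A_col : forall j, \sum_i A i j = s.
Hypothesis P_unitary : P \is unitarymx.
Hypothesis AcE :
  map_mx (real_complex R) A = P^t* *m diag_mx (\row_i (d i)%:C%C) *m P.

Let cx (x : 'rV[R]_n) : 'rV[R[i]]_n := map_mx (real_complex R) x.
Let ones : 'rV[R[i]]_n := const_mx 1.
Let weight (x : 'rV[R]_n) i := coords P (cx x) 0 i * (coords P (cx x) 0 i)^*.

Lemma eigenvalue_le_colsum i : d i <= s.
Proof.
rewrite -lecR; apply: le_trans (real_ler_norm _) _.
  by apply/complex_realP; exists (d i).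
apply: (left_eigenvalue_le_colsum (map_mx (real_complex R) A) _ _ (row i P)).
- by move=> k l; rewrite mxE ler0c.
- move=> l; rewrite -(A_col l) rmorph_sum.
  by apply: eq_bigr => k _; rewrite mxE.
- exact: row_unitary_neq0.
- by rewrite AcE row_left_eigen // mxE.
Qed.

Lemma ones_eigen : ones *m map_mx (real_complex R) A = s%:C%C *: ones.
Proof.
apply/rowP => j; rewrite !mxE -(A_col j) rmorph_sum /= mulr1.
by apply: eq_bigr => k _; rewrite !mxE mul1r.
Qed.

Lemma ones_coords_eigen k : coords P ones 0 k != 0 -> d k = s.
Proof.
move=> ok; apply: (fmorph_inj (real_complex R)).
have ones_M :
    ones *m (P^t* *m diag_mx (\row_i (d i)%:C%C) *m P) = s%:C%C *: ones.
  by rewrite -AcE ones_eigen.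
by have := eigen_coords P_unitary _ _ _ ones_M ok; rewrite mxE.
Qed.

Lemma ones_coords_nonzero : (0 < n)%N -> exists k, coords P ones 0 k != 0.
Proof.
move=> n_gt0; apply/existsP; apply: contraT; rewrite negb_exists => /forallP o0.
have : (ones *m ones^t*) 0 0 = 0.
  rewrite (dot_coords P_unitary) big1 // => k _.
  by move: (o0 k); rewrite negbK => /eqP ->; rewrite mul0r.
rewrite !mxE (eq_bigr (fun=> 1)) => [|k _]; last by rewrite !mxE conjC1 mulr1.
rewrite sumr_const card_ord => /eqP; rewrite pnatr_eq0 => /eqP n0.
by rewrite n0 in n_gt0.
Qed.

Lemma quad_form_weights x :
  ((x *m A *m x^T) 0 0)%:C%C = \sum_i (d i)%:C%C * weight x i.
Proof.
have -> : ((x *m A *m x^T) 0 0)%:C%C =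
    (cx x *m map_mx (real_complex R) A *m (cx x)^t*) 0 0.
  by rewrite real_conjmx -!map_mxM [in RHS]mxE.
by rewrite AcE quad_coords; apply: eq_bigr => i _; rewrite mxE.
Qed.

Lemma norm_weights x : ((x *m x^T) 0 0)%:C%C = \sum_i weight x i.
Proof.
have -> : ((x *m x^T) 0 0)%:C%C = (cx x *m (cx x)^t*) 0 0.
  by rewrite real_conjmx -!map_mxM [in RHS]mxE.
exact: (dot_coords P_unitary).
Qed.

(* If the eigenvalue s is carried by the single eigenvector j, then the
   all-ones vector is proportional to it, and the weight of x on j is the
   squared mean (sum x)^2 / n. *)
Lemma top_weight x j : (forall k, d k = s -> k = j) ->
  weight x j * n%:R = ((\sum_i x 0 i) ^+ 2)%:C%C.
Proof.
move=> s_at_j.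
have ones_supp k : k != j -> coords P ones 0 k = 0.
  by move=> kj; apply/eqP; apply: contraNT kj => /ones_coords_eigen/s_at_j ->.
have sum_x : (\sum_i x 0 i)%:C%C = (cx x *m ones^t*) 0 0.
  rewrite mxE rmorph_sum; apply: eq_bigr => i _.
  by rewrite !mxE conjC1 mulr1.
have sum_x' : (\sum_i x 0 i)%:C%C = (ones *m (cx x)^t*) 0 0.
  rewrite real_conjmx mxE rmorph_sum; apply: eq_bigr => i _.
  by rewrite !mxE mul1r.
have ones_norm : (ones *m ones^t*) 0 0 = n%:R.
  rewrite mxE -[n in RHS]card_ord -sumr_const; apply: eq_bigr => i _.
  by rewrite !mxE conjC1 mulr1.
rewrite -ones_norm -(dot_single_coord P_unitary _ _ _ ones_supp) -sum_x -sum_x'.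
by rewrite rmorphXn expr2.
Qed.

Lemma quad_form_le (l2 : R) (i2 : 'I_n) (x : 'rV[R]_n) :
  l2 = d i2 -> (forall i k, l2 < d i -> l2 < d k -> i = k) ->
  (x *m A *m x^T) 0 0 <=
    l2 * (x *m x^T) 0 0 + (s - l2) * ((\sum_i x 0 i) ^+ 2 / n%:R).
Proof.
move=> l2E above_uniq.
have n_gt0 : (0 < n)%N := leq_ltn_trans (leq0n i2) (ltn_ord i2).
have n_neq0 : n%:R != 0 :> R[i] by rewrite pnatr_eq0 -lt0n.
have l2_le_s : l2 <= s by rewrite l2E eigenvalue_le_colsum.
have [j [others top]] : exists j, (forall k, k != j -> d k <= l2) /\
    (d j <= l2 \/ d j = s /\ weight x j = ((\sum_i x 0 i) ^+ 2 / n%:R)%:C%C).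
  case: (pickP (fun j => l2 < d j)) => [j l2_dj | none]; last first.
    by exists i2; split=> [k _|]; [rewrite leNgt none | left; rewrite l2E].
  have s_at_j k : d k = s -> k = j.
    move=> dk; apply: (above_uniq _ _ _ l2_dj).
    by rewrite dk (lt_le_trans l2_dj) ?eigenvalue_le_colsum.
  have [k0 /ones_coords_eigen dk0] := ones_coords_nonzero n_gt0.
  exists j; split=> [k kj|].
    by rewrite leNgt; apply: contra kj => /above_uniq/(_ l2_dj) ->.
  right; split; first by rewrite -(s_at_j k0 dk0).
  apply: (mulIf n_neq0); rewrite top_weight // -(rmorph_nat (real_complex R)).
  by rewrite -rmorphM divfK // pnatr_eq0 -lt0n.
rewrite -lecR rmorphD 2!rmorphM rmorphB /= quad_form_weights norm_weights.
apply: (weighted_sum_le j) => [i||||].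
- exact: mul_conjC_ge0.
- by rewrite lecR.
- by rewrite ler0c divr_ge0 ?sqr_ge0 ?ler0n.
- by move=> k kj; rewrite lecR others.
- by case: top => [djl|[-> ->]]; [left; rewrite lecR | right].
Qed.

End SpectralQuadraticBound.

Lemma second_eigenvalue_bound {R : rcfType} {n} (A : 'M[R]_n) (s l2 : R)
    (x : 'rV[R]_n) :
  A^T = A -> (forall i j, 0 <= A i j) -> (forall j, \sum_i A i j = s) ->
  second_largest_eigenvalue A l2 -> (1 < n)%N ->
  l2 <= s /\ (x *m A *m x^T) 0 0 <=
    l2 * (x *m x^T) 0 0 + (s - l2) * ((\sum_i x 0 i) ^+ 2 / n%:R).
Proof.
move=> Asym A_ge0 A_col l2_second n_gt1.
have [P P_unitary [d [AcE [i2 l2E] above_uniq]]] :=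
  second_eigenvalue_spectral A l2 Asym l2_second n_gt1.
split; first by rewrite l2E (eigenvalue_le_colsum A_ge0 A_col P_unitary AcE).
exact: (quad_form_le A_ge0 A_col P_unitary AcE _ i2 _ l2E above_uniq).
Qed.

Lemma card_rel_pairs {T : finType} (Q : rel T) :
  #|[set p : T * T | Q p.1 p.2]| = (\sum_i \sum_j Q i j)%N.
Proof.
rewrite -sum1_card pair_big /= big_mkcond /=.
by apply: eq_bigr => p _; rewrite inE; case: (Q _ _).
Qed.

Lemma set2_ordered_inj {n} {a b c d : 'I_n} : (a < b)%N -> (c < d)%N ->
  [set a; b] = [set c; d] -> a = c /\ b = d.
Proof.
move=> ab cd abcd.
have : a \in [set c; d] by rewrite -abcd !inE eqxx.
have : b \in [set c; d] by rewrite -abcd !inE eqxx orbT.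
have : c \in [set a; b] by rewrite abcd !inE eqxx.
rewrite !inE => /orP[] /eqP ca /orP[] /eqP bc /orP[] /eqP ac; subst => //.
all: by move: ab cd; rewrite ?ltnn // => /ltn_trans h /h; rewrite ltnn.
Qed.

Section DoubleCounting.
Context {n : nat} {e : rel 'I_n}.
Hypothesis e_simple : simple_graph e.

Definition oriented (E : {set {set 'I_n}}) : {set 'I_n * 'I_n} :=
  [set p | e p.1 p.2 && ([set p.1; p.2] \in E)].

(* Orienting each edge of E from its smaller to its larger endpoint is a
   bijection onto the increasing oriented pairs. *)
Lemma card_oriented_increasing {E : {set {set 'I_n}}} : E \subset edges e ->
  #|[set p in oriented E | (p.1 < p.2)%N]| = #|E|.
Proof.
have [e_sym e_irr] := e_simple; move=> E_sub.
have E_image : E = (fun p : 'I_n * 'I_n => [set p.1; p.2]) @: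
    [set p in oriented E | (p.1 < p.2)%N].
  apply/setP => f; apply/idP/imsetP => [fE|[p]]; last first.
    by rewrite !inE => /andP[/andP[_ ?] _] ->.
  case/imset2P: (subsetP E_sub f fE) => a b _; rewrite inE /= => eab fab.
  have [ab|ba|ab] := ltngtP a b; last by move: eab; rewrite (val_inj ab) e_irr.
    by exists (a, b); rewrite // !inE /= eab -fab fE.
  exists (b, a); last by rewrite /= fab setUC.
  by rewrite !inE /= e_sym eab setUC -fab fE.
rewrite {2}E_image card_in_imset // => -[a b] [c d].
by rewrite !inE /= => /andP[_ ab] /andP[_ cd] /(set2_ordered_inj ab cd) [-> ->].
Qed.

Lemma card_oriented {E : {set {set 'I_n}}} : E \subset edges e ->
  #|oriented E| = (2 * #|E|)%N.
Proof.
have [e_sym e_irr] := e_simple; move=> E_sub.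
set up := [set p in oriented E | (p.1 < p.2)%N].
set down := [set p in oriented E | (p.2 < p.1)%N].
have down_swap : down = (fun p => (p.2, p.1)) @: up.
  apply/setP => -[a b]; apply/idP/imsetP => [|[[c d]]].
    rewrite !inE /= => /andP[/andP[eab abE] ba].
    by exists (b, a); rewrite // !inE /= ba -e_sym eab setUC abE.
  rewrite !inE /= => /andP[/andP[ecd cdE] cd] [-> ->].
  by rewrite -e_sym ecd setUC cdE.
have oriented_split : oriented E = up :|: down.
  apply/setP => -[a b]; rewrite !inE /=.
  by case: ltngtP => [||/val_inj ->]; rewrite ?andbT ?andbF ?orbF ?e_irr.
have up_down : up :&: down = set0.
  by apply/setP => -[a b]; rewrite !inE /=; case: ltngtP; rewrite ?andbF.
rewrite oriented_split cardsU up_down cards0 subn0 down_swap card_imset.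
  by rewrite card_oriented_increasing // addnn mul2n.
by move=> [? ?] [? ?] [-> ->].
Qed.

Lemma edge_order_gt1 {E : {set {set 'I_n}}} :
  E \subset edges e -> (0 < #|E|)%N -> (1 < n)%N.
Proof.
have [_ e_irr] := e_simple; move=> E_sub; rewrite card_gt0 => /set0Pn[f fE].
case/imset2P: (subsetP E_sub f fE) => a b _; rewrite inE /= => eab _.
have ab : a != b by apply: contraTneq eab => ->; rewrite e_irr.
by rewrite -[n]card_ord (leq_trans _ (max_card [set a; b])) // cards2 ab.
Qed.

Lemma card_oriented_edges s : regular e s -> #|oriented (edges e)| = (s * n)%N.
Proof.
move=> e_reg; have [e_sym _] := e_simple.
have -> : oriented (edges e) = [set p | e p.1 p.2].
  apply/setP => -[a b]; rewrite !inE /=; case: (boolP (e a b)) => //= eab.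
  by apply/imset2P; exists a b; rewrite ?inE.
rewrite card_rel_pairs (eq_bigr (fun=> s)) ?sum_nat_const ?card_ord 1?mulnC //.
move=> a _; rewrite -(e_reg a) -sum1_card [RHS]big_mkcond /=.
by apply: eq_bigr => b _; rewrite inE; case: (e a b).
Qed.

Lemma oriented_sub_incident (E : {set {set 'I_n}}) :
  oriented E \subset [set p | e p.1 p.2 && (p.1 \in incident_vertices E)
                                       && (p.2 \in incident_vertices E)].
Proof.
apply/subsetP => -[a b]; rewrite !inE /= => /andP[-> abE] /=.
apply/andP; split; apply/existsP; exists [set a; b].
  by rewrite abE !inE eqxx.
by rewrite abE !inE eqxx orbT.
Qed.

End DoubleCounting.

Section IndicatorQuadraticForm.
Context {R : numDomainType} {n : nat} (G : {set 'I_n}).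

Definition indicator : 'rV[R]_n := \row_i (i \in G)%:R.

Lemma sum_indicator : \sum_i indicator 0 i = #|G|%:R.
Proof.
rewrite -sum1_card natr_sum [RHS]big_mkcond /=.
by apply: eq_bigr => i _; rewrite mxE; case: (i \in G).
Qed.

Lemma norm_indicator : (indicator *m indicator^T) 0 0 = #|G|%:R.
Proof.
rewrite -sum_indicator mxE; apply: eq_bigr => i _.
by rewrite !mxE; case: (i \in G); rewrite ?mulr1 ?mulr0.
Qed.

Lemma adjacency_quad_indicator (e : rel 'I_n) :
  (indicator *m adjacency R e *m indicator^T) 0 0 =
  #|[set p : 'I_n * 'I_n | e p.1 p.2 && (p.1 \in G) && (p.2 \in G)]|%:R.
Proof.
rewrite (card_rel_pairs (fun i j => e i j && (i \in G) && (j \in G))).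
rewrite natr_sum mxE (eq_bigr (fun j =>
  \sum_i indicator 0 i * adjacency R e i j * indicator 0 j)).
  rewrite exchange_big /=; apply: eq_bigr => i _; rewrite natr_sum.
  apply: eq_bigr => j _; rewrite !mxE.
  by case: (i \in G); case: (j \in G); case: (e i j);
    rewrite ?mulr1 ?mulr0 ?mul0r.
by move=> j _; rewrite !mxE mulr_suml; apply: eq_bigr => i _; rewrite mxE.
Qed.

End IndicatorQuadraticForm.

(* If c t^2 + 2 l t - 4 >= 0 with t = k / m > 0, then t lies above the
   positive root (q - l) / c of this quadratic, where q = sqrt (l^2 + 4c). *)
Lemma quadratic_root_bound {R : realFieldType} (c l q m k : R) :
  0 < c -> 0 < m -> 0 <= k -> 0 <= q -> q ^+ 2 = l ^+ 2 + 4 * c ->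
  4 * m ^+ 2 <= 2 * m * l * k + c * k ^+ 2 -> (q - l) * m <= c * k.
Proof.
move=> c_gt0 m_gt0 k_ge0 q_ge0 qE quad.
set u := c * k + l * m.
have sq_le : (q * m) ^+ 2 <= u ^+ 2.
  have -> : (q * m) ^+ 2 = l ^+ 2 * m ^+ 2 + c * (4 * m ^+ 2).
    by rewrite exprMn qE; ring.
  have -> : u ^+ 2 = l ^+ 2 * m ^+ 2 + c * (2 * m * l * k + c * k ^+ 2).
    by rewrite /u; ring.
  by rewrite lerD2l ler_pM2l.
have l_lt_q : `|l| < q.
  rewrite -(ltr_pXn2r (n := 2)) // ?nnegrE //.
  by rewrite real_normK ?num_real // qE; lra.
have u_gt : - (q * m) < u.
  have : - `|l| <= l by rewrite lerNl -normrN ler_norm.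
  rewrite /u; nra.
rewrite mulrBl lerBlDr -/u leNgt; apply/negP => u_lt.
have : 0 < (q * m - u) * (q * m + u) by apply: mulr_gt0; lra.
by rewrite -subr_sqr subr_gt0 ltNge sq_le.
Qed.

Lemma expansion_arith {R : rcfType} (alpha l S M K N : R) :
  0 < alpha -> 0 < M -> 0 <= K -> 0 < N -> 0 <= S -> l <= S ->
  2 * M <= l * K + (S - l) * (K ^+ 2 / N) -> 2 * M <= alpha * S * N ->
  (Num.sqrt (l ^+ 2 + 4 * S * (S - l) * alpha) - l) / (S * (S - l) * alpha) * M
    <= K.
Proof.
move=> alpha_gt0 M_gt0 K_ge0 N_gt0 S_ge0 l_le_S spectral size.
have -> : 4 * S * (S - l) * alpha = 4 * (S * (S - l) * alpha) by ring.
set c := S * (S - l) * alpha.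
have c_ge0 : 0 <= c by rewrite /c !mulr_ge0 ?subr_ge0 // ltW.
have [c0|c_neq0] := eqVneq c 0; first by rewrite c0 invr0 mulr0 mul0r.
have c_gt0 : 0 < c by rewrite lt_def c_neq0.
have quad : 4 * M ^+ 2 <= 2 * M * l * K + c * K ^+ 2.
  have q_ge0 : 0 <= (S - l) * (K ^+ 2 / N).
    by rewrite mulr_ge0 ?subr_ge0 ?divr_ge0 ?sqr_ge0 // ltW.
  have cK : c * K ^+ 2 = alpha * S * N * ((S - l) * (K ^+ 2 / N)).
    by rewrite /c; field; rewrite gt_eqF.
  rewrite cK; nra.
have disc_ge0 : 0 <= l ^+ 2 + 4 * c.
  by apply: addr_ge0; [exact: sqr_ge0 | apply: mulr_ge0].
rewrite mulrAC ler_pdivrMr // [K * c]mulrC.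
by apply: quadratic_root_bound; rewrite ?sqrtr_ge0 ?sqr_sqrtr.
Qed.

Lemma adjacency_regular {R : numDomainType} {n} (e : rel 'I_n) (s : nat) :
  simple_graph e -> regular e s ->
  [/\ (adjacency R e)^T = adjacency R e, forall i j, 0 <= adjacency R e i j
    & forall j, \sum_i adjacency R e i j = s%:R].
Proof.
move=> [e_sym _] e_reg; split=> [|i j|j].
- by apply/matrixP => i j; rewrite !mxE e_sym.
- by rewrite mxE ler0n.
- rewrite -(e_reg j) -sum1_card natr_sum [RHS]big_mkcond /=.
  by apply: eq_bigr => i _; rewrite !mxE inE e_sym; case: (e j i).
Qed.

Theorem mainTheorem6 (R : rcfType) (n : nat) (e : rel 'I_n) (s : nat)
  (l2 alpha : R) (E : {set {set 'I_n}}) :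
  simple_graph e -> regular e s -> connected_graph e ->
  second_largest_eigenvalue (adjacency R e) l2 ->
  0 < alpha -> alpha <= 1 ->
  E \subset edges e ->
  (#|E|%:R <= alpha * #|edges e|%:R) ->
  let beta := (Num.sqrt (l2 ^+ 2 + 4 * s%:R * (s%:R - l2) * alpha) - l2)
              / (s%:R * (s%:R - l2) * alpha) in
  beta * #|E|%:R <= #|incident_vertices E|%:R.
Proof.
move=> e_simple e_reg _ l2_second alpha_gt0 _ E_sub E_size; cbv zeta.
have [->|E_gt0] := posnP #|E|; first by rewrite mulr0.
have n_gt1 := edge_order_gt1 e_simple E_sub E_gt0.
have [A_sym A_ge0 A_col] := adjacency_regular (R := R) e s e_simple e_reg.
set G := incident_vertices E.
have [l2_le_s spectral] := second_eigenvalue_bound _ _ _ (indicator G)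
  A_sym A_ge0 A_col l2_second n_gt1.
rewrite adjacency_quad_indicator norm_indicator sum_indicator in spectral.
have E_inside : (2 * #|E|)%:R <=
    #|[set p | e p.1 p.2 && (p.1 \in G) && (p.2 \in G)]|%:R :> R.
  rewrite ler_nat -(card_oriented e_simple E_sub).
  exact/subset_leq_card/oriented_sub_incident.
have edges_total : (2 * #|edges e|)%N = (s * n)%N.
  rewrite -(card_oriented e_simple (subxx _)).
  exact: card_oriented_edges e_simple _ e_reg.
apply: (expansion_arith _ _ _ _ _ n%:R); rewrite ?ltr0n ?ler0n ?(ltnW n_gt1) //.
  by rewrite -natrM (le_trans E_inside spectral).
by rewrite -mulrA -[s%:R * _]natrM -edges_total natrM mulrCA ler_pM2l.
Qed.
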